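(* Let $G,H$ be groups and suppose that $\mathrm{Hom}(H,G)$ contains a homomorphism with infinite image. Let $\mathcal{T}=\phi^*\circ\tau$ with $\phi\in\mathrm{Hom}(H,G)$ and $\tau\in\mathrm{CA}(A^G)$. Then $\mathcal{T}$ is constant if and only if $\mathcal{T}=\psi^*\circ\tau$ for every $\psi\in\mathrm{Hom}(H,G)$.
   Context: $A$ is a finite set with $|A|\ge 2$. $A^G$ is the set of functions $G\to A$ with shift action $(g\cdot x)(k):=x(g^{-1}k)$. $\mathrm{CA}(A^G)$ is the set of maps $\tau:A^G\to A^G$ for which there exist finite $T\subseteq G$ and $\mu:A^T\to A$ with $\tau(x)(g)=\mu((g^{-1}\cdot x)|_T)$ for all $x,g$. For $\phi\in\mathrm{Hom}(H,G)$, $\phi^*:A^G\to A^H$ is $\phi^*(x):=x\circ\phi$. *)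

From Stdlib Require List.
From mathcomp Require Import all_boot.
Set Implicit Arguments. Unset Strict Implicit. Unset Printing Implicit Defensive.

Record group := Group {
  gcarrier :> Type;
  gmul : gcarrier -> gcarrier -> gcarrier;
  gone : gcarrier;
  ginv : gcarrier -> gcarrier;
  gmulA : forall x y z, gmul x (gmul y z) = gmul (gmul x y) z;
  gmul1 : forall x, gmul gone x = x;
  gmulV : forall x, gmul (ginv x) x = gone
}.

Arguments gmul {g}. Arguments gone {g}. Arguments ginv {g}.

Definition is_hom (H G : group) (f : H -> G) : Prop :=
  forall a b : H, f (gmul a b) = gmul (f a) (f b).

Definition infinite_image (H G : group) (f : H -> G) : Prop :=
  ~ exists l : list G, forall h : H, List.In (f h) l.

Definition shift (A : Type) (G : group) (g : G) (x : G -> A) : G -> A :=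
  fun k => x (gmul (ginv g) k).

(* Cellular automata on A^G: a finite memory set T = {t 0, ..., t (n-1)}
   and a local rule mu : A^T -> A. *)
Definition is_CA (A : finType) (G : group) (tau : (G -> A) -> (G -> A)) : Prop :=
  exists (n : nat) (t : 'I_n -> G) (mu : {ffun 'I_n -> A} -> A),
    forall (x : G -> A) (g : G),
      tau x g = mu [ffun i => shift (ginv g) x (t i)].

Definition pullback (A : Type) (H G : group) (phi : H -> G) (x : G -> A) : H -> A :=
  fun h => x (phi h).

Definition is_constant (X Y : Type) (F : X -> Y) : Prop :=
  exists c : Y, forall x, F x = c.

(* We first rewrite a CA through its local rule as
   tau x g = mu (k |-> x (g * t k)), with memory set T = {t k}.
   - If phi^* o tau is constant, then tau itself is constant: by
     translation-equivariance every value tau x g is a value tau y (phi 1).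
     A constant tau makes all the maps psi^* o tau equal.
   - Conversely, comparing phi with the trivial homomorphism and with a
     homomorphism f of infinite image shows tau z (f h) = tau z 1 for all z, h.
     Since f has infinite image we may pick g = f h with g T disjoint from T;
     gluing x on T with a constant configuration on g T then yields
     tau x 1 = tau y 1 for all x, y, so tau x (phi h) = tau x 1 is a constant. *)
From Stdlib Require Import ClassicalEpsilon FunctionalExtensionality.
From mathcomp Require Import all_boot.

Set Implicit Arguments. Unset Strict Implicit. Unset Printing Implicit Defensive.

Lemma gmulVr (G : group) (x : G) : gmul x (ginv x) = gone.
Proof.
set y := gmul x (ginv x).
have yy : gmul y y = y by rewrite /y -gmulA (gmulA (ginv x) x) gmulV gmul1.
by rewrite -(gmul1 y) -{1}(gmulV y) -gmulA yy gmulV.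
Qed.

Lemma gmulr1 (G : group) (x : G) : gmul x gone = x.
Proof. by rewrite -(gmulV x) gmulA gmulVr gmul1. Qed.

Lemma ginvK (G : group) (x : G) : ginv (ginv x) = x.
Proof. by rewrite -(gmulr1 (ginv (ginv x))) -(gmulV x) gmulA gmulV gmul1. Qed.

Lemma in_In (T : eqType) (x : T) (s : seq T) : x \in s -> List.In x s.
Proof.
elim: s => //= a s IH; rewrite in_cons => /orP [/eqP ->|]; first by left.
by move=> /IH; right.
Qed.

Lemma infinite_image_avoid (H G : group) (f : H -> G) (l : list G) :
  infinite_image f -> exists h, ~ List.In (f h) l.
Proof. by move=> finf; apply: not_all_ex_not => allin; apply: finf; exists l. Qed.

Lemma pullback_eqP (A : Type) (G H : group) (phi psi : H -> G) (tau : (G -> A) -> G -> A) :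
  pullback phi \o tau = pullback psi \o tau ->
  forall x h, tau x (phi h) = tau x (psi h).
Proof. by move=> E x h; have := congr1 (fun F => F x h) E. Qed.

Lemma CA_local_rule (A : finType) (G : group) (tau : (G -> A) -> G -> A) :
  is_CA tau -> exists (n : nat) (t : 'I_n -> G) (mu : {ffun 'I_n -> A} -> A),
    forall x g, tau x g = mu [ffun k => x (gmul g (t k))].
Proof.
case=> n [t [mu htau]]; exists n, t, mu => x g; rewrite htau.
by congr mu; apply/ffunP => k; rewrite !ffunE /shift ginvK.
Qed.

Section LocalRule.

Variables (A : finType) (G : group) (n : nat) (t : 'I_n -> G).
Variables (mu : {ffun 'I_n -> A} -> A) (tau : (G -> A) -> G -> A).
Hypothesis tauE : forall x g, tau x g = mu [ffun k => x (gmul g (t k))].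

Lemma tau_local (x z : G -> A) (g : G) :
  (forall k, x (gmul g (t k)) = z (gmul g (t k))) -> tau x g = tau z g.
Proof. by move=> xz; rewrite !tauE; congr mu; apply/ffunP => k; rewrite !ffunE. Qed.

Lemma tau_translate (x : G -> A) (g k : G) :
  tau x (gmul g k) = tau (fun u => x (gmul g u)) k.
Proof. by rewrite !tauE; congr mu; apply/ffunP => i; rewrite !ffunE gmulA. Qed.

Lemma tau_constant_of_pullback (H : group) (phi : H -> G) :
  is_constant (pullback phi \o tau) -> exists c, forall x g, tau x g = c.
Proof.
case=> c hc; exists (c gone) => x g; set p := phi gone.
have -> : g = gmul (gmul g (ginv p)) p by rewrite -gmulA gmulV gmulr1.
by rewrite tau_translate -(hc (fun u => x (gmul (gmul g (ginv p)) u))).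
Qed.

(* The finite set T T^{-1}: translates by g outside it move T off itself. *)
Definition offsets : list G :=
  List.map (fun ij : 'I_n * 'I_n => gmul (t ij.1) (ginv (t ij.2)))
           (enum (@predT ('I_n * 'I_n)%type)).

Lemma offsets_disjoint (g : G) :
  ~ List.In g offsets -> forall i j, gmul g (t j) <> t i.
Proof.
move=> notin i j E; apply: notin.
have -> : g = gmul (t i) (ginv (t j)) by rewrite -E -gmulA gmulVr gmulr1.
by apply: (List.in_map _ _ (i, j)); apply: in_In; rewrite mem_enum.
Qed.

(* Key step: if tau z g = tau z 1 for all z and g T is disjoint from T, then
   tau x 1 is independent of x, by gluing x on T with y on g T. *)
Lemma tau_one_constant (g : G) :
  (forall i j, gmul g (t j) <> t i) -> (forall z, tau z g = tau z gone) ->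
  forall x y, tau x gone = tau y gone.
Proof.
move=> disj hg x y.
pose z u := if excluded_middle_informative (exists j, u = gmul g (t j))
            then y (gmul (ginv g) u) else x u.
have zT : tau x gone = tau z gone.
  apply: tau_local => k; rewrite gmul1 /z.
  by case: (excluded_middle_informative _) => // -[j hj]; case: (disj _ _ (esym hj)).
have zgT : tau z g = tau y gone.
  have -> : tau y gone = tau y (gmul (ginv g) g) by rewrite gmulV.
  rewrite tau_translate; apply: tau_local => k; rewrite /z.
  case: (excluded_middle_informative _) => [gT|nE]; last by case: nE; exists k.
  by rewrite gmulA gmulV gmul1.
by rewrite zT -hg zgT.
Qed.

End LocalRule.

Theorem lemma3p8 (A : finType) (G H : group)
  (hA : 2 <= #|A|)
  (hinf : exists f : H -> G, is_hom f /\ infinite_image f)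
  (phi : H -> G) (hphi : is_hom phi)
  (tau : (G -> A) -> (G -> A)) (htau : is_CA tau) :
  is_constant (pullback phi \o tau) <->
  (forall psi : H -> G, is_hom psi -> pullback phi \o tau = pullback psi \o tau).
Proof.
have [n [t [mu tauE]]] := CA_local_rule htau.
split.
  move=> /(tau_constant_of_pullback tauE) [c hc] psi _.
  by apply: functional_extensionality => x; apply: functional_extensionality => h;
     rewrite /= /pullback !hc.
move=> Hall.
have trivial_hom : is_hom (fun _ : H => (gone : G)) by move=> a b; rewrite gmul1.
have phi1 := pullback_eqP (Hall _ trivial_hom).
have [f [hf finf]] := hinf.
have [h1 notin] := infinite_image_avoid (offsets t) finf.
have f1 z : tau z (f h1) = tau z gone by rewrite -(pullback_eqP (Hall _ hf)) phi1.
have tau1 := tau_one_constant tauE (offsets_disjoint notin) f1.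
have [a _] := card_gt0P (ltnW hA).
exists (fun _ => tau (fun _ => a) gone) => x.
by apply: functional_extensionality => h; rewrite /= /pullback phi1 (tau1 x (fun _ => a)).
Qed.
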